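(* Let $\Gamma=(V,E)$ be a finite simple graph on $V=\{1,\dots,n\}$, let $\omega$ be the clique number of $\Gamma$ (the largest size of a clique in $\Gamma$), and let $\{T_j\}_{j=1}^n$ be a $\Gamma$-family on a Hilbert space $\mathcal{H}$ satisfying the weak Brehmer's condition. Then for each $m\geq1$ and each $h\in\mathcal{H}$, \[\sum_{p\in A_\Gamma^+,\ |p|=m}\|T_p^*h\|^2\leq\binom{\omega+m-1}{m}\|h\|^2.\]
   Context: $A_\Gamma^+=\langle e_1,\dots,e_n : e_ie_j=e_je_i \text{ if } ij\in E\rangle$ is the right-angled Artin monoid; $|p|$ denotes the total number of generators in any expression of $p$ as a product of generators (well-defined), with $|1|=0$. A $\Gamma$-family is a family of contractions $T_1,\dots,T_n$ on $\mathcal{H}$ with $T_iT_j=T_jT_i$ whenever $ij\in E$; it defines a unital representation $p\mapsto T_p$ of $A_\Gamma^+$ with $T_{e_i}=T_i$. For a finite $U\subset A_\Gamma^+$, $\vee U=\infty$ if $\bigcap_{p\in U}pA_\Gamma^+=\emptyset$, otherwise $\vee U$ is the unique $r$ with $\bigcap_{p\in U}pA_\Gamma^+=rA_\Gamma^+$ ($\vee\emptyset=1$); $T_{\vee U}:=0$ if $\vee U=\infty$. For a set $U$ of generators, $\vee U<\infty$ iff the corresponding vertices form a clique, and then $\vee U=\prod_{e_i\in U}e_i$. The complement graph $\Gamma^c$ has vertex set $V$ and edges $\{ij: i\ne j,\ ij\notin E\}$. Weak Brehmer's condition: for each vertex set $V_i$ of a connected component of $\Gamma^c$, with $\Gamma_i=\Gamma|_{V_i}$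 (the induced subgraph), and for each clique $W$ of $\Gamma_i$ (including $W=\emptyset$), setting $N_{\Gamma_i}(W)=\{e_j: j\in V_i,\ jk\in E \text{ for all } k\in W\}$, one has $\sum_{U\subseteq N_{\Gamma_i}(W)}(-1)^{|U|}T_{\vee U}T_{\vee U}^*\geq0$. *)

From HB Require Import structures.
From mathcomp Require Import all_boot all_order all_algebra.
From mathcomp Require Import reals.
From mathcomp.real_closed Require Import complex.
Set Implicit Arguments. Unset Strict Implicit. Unset Printing Implicit Defensive.
Import Order.TTheory GRing.Theory Num.Theory.
Local Open Scope ring_scope.

Section Hilbert.
Variables (R : realType) (H : lmodType R[i]) (ip : H -> H -> R[i]).

Definition is_inner_product : Prop :=
  [/\ forall (a : R[i]) (x y z : H), ip (a *: x + y) z = a * ip x z + ip y z,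
      forall x y : H, ip y x = ((ip x y)^*)%C,
      forall x : H, 0 <= ip x x
    & forall x : H, ip x x = 0 -> x = 0].

Definition hnorm (x : H) : R := Num.sqrt (complex.Re (ip x x)).

Definition hilbert_complete : Prop :=
  forall u : nat -> H,
    (forall eps : R, 0 < eps -> exists N : nat,
        forall p q : nat, (N <= p)%N -> (N <= q)%N -> hnorm (u p - u q) < eps) ->
    exists l : H, forall eps : R, 0 < eps -> exists N : nat,
        forall p : nat, (N <= p)%N -> hnorm (u p - l) < eps.

Definition is_linear_op (T : H -> H) : Prop :=
  forall (a : R[i]) (x y : H), T (a *: x + y) = a *: T x + T y.

Definition is_adjoint (T Ts : H -> H) : Prop :=
  forall x y : H, ip (T x) y = ip x (Ts y).

Definition is_contraction (T : H -> H) : Prop :=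
  forall x : H, hnorm (T x) <= hnorm x.

Definition is_positive_op (A : H -> H) : Prop := forall h : H, 0 <= ip (A h) h.

End Hilbert.

Section Graph.
Variables (n : nat) (e : rel 'I_n).

Definition simple_graph : Prop := symmetric e /\ irreflexive e.

Definition is_clique (W : {set 'I_n}) : bool :=
  [forall i in W, forall j in W, (i != j) ==> e i j].

Definition clique_number : nat := \max_(W : {set 'I_n} | is_clique W) #|W|.

Definition compl_rel : rel 'I_n := fun i j => (i != j) && ~~ e i j.

Definition compl_component (v : 'I_n) : {set 'I_n} := [set u | connect compl_rel v u].

Definition nbhd_in (Vi W : {set 'I_n}) : {set 'I_n} :=
  [set j in Vi | [forall k in W, e j k]].

(* ---- words in the generators; A_Gamma^+ elements of length m are classes of
   words of length m modulo swapping adjacent commuting letters ---- *)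
Definition swap_at (k : nat) (s : seq 'I_n) : seq 'I_n :=
  take k s ++ rev (take 2 (drop k s)) ++ drop k.+2 s.

Definition swappable_at (k : nat) (s : seq 'I_n) : bool :=
  if drop k s is a :: b :: _ then e a b else false.

Definition word_step (m : nat) : rel (m.-tuple 'I_n) :=
  fun w w' => [exists k : 'I_m, swappable_at k w && (val w' == swap_at k w)].

End Graph.

Section Family.
Variables (R : realType) (H : lmodType R[i]) (n : nat).
Variables (T Ts : 'I_n -> H -> H).

Definition Tword (s : seq 'I_n) (h : H) : H := foldr (fun i x => T i x) h s.
(* T_p^* = T_{s_k}^* ... T_{s_0}^*  applied to h *)
Definition Tsword (s : seq 'I_n) (h : H) : H := foldl (fun x i => Ts i x) h s.

(* T_{vee U} T_{vee U}^* for a set U of generators: vee U = prod_{i in U} e_i if U is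
   a clique, and vee U = infinity (T_{vee U} = 0) otherwise *)
Definition TjoinTjoinstar (e : rel 'I_n) (U : {set 'I_n}) (h : H) : H :=
  if is_clique e U then Tword (enum U) (Tsword (enum U) h) else 0.

Definition Gamma_family (ip : H -> H -> R[i]) (e : rel 'I_n) : Prop :=
  [/\ forall i, is_linear_op (T i),
      forall i, is_adjoint ip (T i) (Ts i),
      forall i, is_contraction ip (T i)
    & forall i j, e i j -> forall h, T i (T j h) = T j (T i h)].

Definition weak_Brehmer (ip : H -> H -> R[i]) (e : rel 'I_n) : Prop :=
  forall (v : 'I_n) (W : {set 'I_n}),
    let Vi := compl_component e v in
    W \subset Vi -> is_clique e W ->
    is_positive_op ip (fun h =>
      \sum_(U : {set 'I_n} | U \subset nbhd_in e Vi W)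
         (-1) ^+ #|U| *: TjoinTjoinstar e U h).

End Family.

From HB Require Import structures.
From mathcomp Require Import all_boot all_order all_algebra.
From mathcomp Require Import reals.
From mathcomp.real_closed Require Import complex.
Set Implicit Arguments. Unset Strict Implicit. Unset Printing Implicit Defensive.
Import Order.TTheory GRing.Theory Num.Theory.

(* Sums over the elements of length m of the monoid generated by a set S of
   letters are computed as sums over words, each weighted by the inverse size
   of its commutation class.  Let A be a connected component of
   the complement graph inside S, so that every letter of A commutes with every
   letter outside A.  By Moebius inversion over the cliques K of A, ||T_p^* h||^2
   is the sum of the nonnegative weak Brehmer forms of the K, evaluated at
   T_p^* h.  An inclusion-exclusion over the cliques of A that a word can end
   with turns the sum over words avoiding A into a sum over K of the finite
   difference (1 - shift)^|K| of these form sums.  Undoing the differences by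
   |K| <= omega(A) partial summations gives
     sum_{|p| = m, p over S} ||T_p^* h||^2
       <= psum^omega(A) (k |-> sum_{|p| = k, p over S \ A} ||T_p^* h||^2) (m),
   and as clique numbers add up over components, induction on S ends with
   psum^omega applied to the point mass ||h||^2 at 0, which is
   binomial(omega + m - 1, m) ||h||^2. *)

Lemma has_last_split (T : Type) (P : pred T) (w : seq T) : has P w ->
  exists u x z, [/\ w = u ++ x :: z, P x & ~~ has P z].
Proof.
elim/last_ind: w => // w c IH; rewrite -cats1 has_cat /= orbF.
case Pc: (P c); first by move=> _; exists w, c, [::]; rewrite Pc.
rewrite orbF => /IH [u [x [z [-> Px Nz]]]]; exists u, x, (z ++ [:: c]).
by rewrite -catA has_cat /= Pc (negbTE Nz).
Qed.

Lemma cat_split_notin (T : eqType) (p s u z : seq T) b :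
  p ++ s = u ++ b :: z -> b \notin s -> exists z', p = u ++ b :: z' /\ z = z' ++ s.
Proof.
elim: u p => [|c u IH] [|d p] /=.
- by move=> ->; rewrite mem_head.
- by move=> [-> <-] _; exists p.
- by move=> ->; rewrite inE mem_cat mem_head !orbT.
- by move=> [-> /IH E /E [z' [-> ->]]]; exists z'.
Qed.

Section TraceEquivalence.
Variables (n : nat) (e : rel 'I_n).
Hypotheses (e_sym : symmetric e) (e_irr : irreflexive e).

(* Equality in the right-angled Artin monoid, by the projection lemma of trace
   theory: equal projections onto every pair {a, b} of non-commuting letters
   (a = b included, which forces equal letter counts). *)
Definition wproj (a b : 'I_n) (w : seq 'I_n) := filter (pred2 a b) w.

Definition treq (w w' : seq 'I_n) : bool :=
  [forall a, forall b, ~~ e a b ==> (wproj a b w == wproj a b w')].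

Lemma treqP w w' :
  reflect (forall a b, ~~ e a b -> wproj a b w = wproj a b w') (treq w w').
Proof.
apply: (iffP forallP) => [H a b nab | H a].
  by move: (H a) => /forallP /(_ b); rewrite nab => /eqP.
by apply/forallP => b; apply/implyP => nab; apply/eqP; apply: H.
Qed.

Lemma treq_refl w : treq w w.
Proof. exact/treqP. Qed.

Lemma treq_sym w w' : treq w w' = treq w' w.
Proof. by apply/treqP/treqP => H a b nab; rewrite H. Qed.

Lemma treq_trans w1 w2 w3 : treq w1 w2 -> treq w2 w3 -> treq w1 w3.
Proof. by move=> /treqP H1 /treqP H2; apply/treqP => a b nab; rewrite H1 // H2. Qed.

Lemma treq_cat u u' v v' : treq u u' -> treq v v' -> treq (u ++ v) (u' ++ v').
Proof.
move=> /treqP H1 /treqP H2; apply/treqP => a b nab.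
by rewrite /wproj !filter_cat -!/(wproj _ _ _) H1 // H2.
Qed.

Lemma treq_catl u v v' : treq v v' -> treq (u ++ v) (u ++ v').
Proof. exact/treq_cat/treq_refl. Qed.

Lemma treq_catIr u u' s : treq (u ++ s) (u' ++ s) -> treq u u'.
Proof.
move=> /treqP H; apply/treqP => a b nab; move: (H a b nab).
rewrite /wproj !filter_cat => E; apply/eqP; move/eqP: (congr1 rev E).
by rewrite !rev_cat eqseq_cat // => /andP [_ /eqP/(congr1 rev)]; rewrite !revK => ->.
Qed.

Lemma treq_perm w w' : treq w w' -> perm_eq w w'.
Proof.
move=> /treqP H; apply/allP => a _; apply/eqP.
have := H a a; rewrite e_irr /wproj => /(_ isT) /(congr1 size).
by rewrite !size_filter !(@eq_count _ _ (pred1 a)) // => x /=; rewrite orbb.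
Qed.

Lemma treq_size w w' : treq w w' -> size w = size w'.
Proof. by move/treq_perm/perm_size. Qed.

Lemma treq_mem w w' x : treq w w' -> (x \in w) = (x \in w').
Proof. by move/treq_perm/perm_mem. Qed.

Lemma treq_cons_rcons b s : {in s, forall y, e b y} -> treq (b :: s) (rcons s b).
Proof.
move=> Hs; apply/treqP => c d ncd; rewrite /wproj filter_rcons /=.
case: ifP => // Hb; suff -> : [seq x <- s | pred2 c d x] = [::] by [].
apply/eqP; rewrite -[_ == [::]]negbK -has_filter.
apply/hasPn => y ys /=; apply/negP => /orP [] /eqP Ey; subst y;
  move: (Hs _ ys) Hb => eb /orP [] /eqP Eb; subst b;
  by move: eb ncd; rewrite ?e_irr // ?(e_sym d c) => ->.
Qed.

Lemma treq_clique s s' : perm_eq s s' ->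
  {in s &, forall x y, x != y -> e x y} -> treq s s'.
Proof.
move=> P C; apply/treqP => c d ncd.
have [x Ax] : exists x, all (pred1 x) (wproj c d s).
  case cs: (c \in s); [exists c | exists d]; apply/allP => y;
    rewrite mem_filter => /andP [/orP [] /eqP -> ys] //=; last by rewrite ys in cs.
  apply/negPn/negP => ndc; move: (C _ _ cs ys); rewrite eq_sym ndc => /(_ isT).
  by rewrite (negbTE ncd).
have P' := perm_filter (pred2 c d) P.
have Ax' : all (pred1 x) (wproj c d s') by rewrite -(perm_all _ P').
by rewrite (all_pred1P _ _ Ax) (all_pred1P _ _ Ax') (perm_size P').
Qed.

Lemma treq_rcons_split w v x : treq w (rcons v x) ->
  exists u z, w = u ++ x :: z /\ {in z, forall y, e x y}.
Proof.
move=> H.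
have xw : has (pred1 x) w by rewrite has_pred1 (treq_mem _ H) mem_rcons mem_head.
have [u [x' [z [Ew /eqP Ex Nz]]]] := has_last_split xw; subst x' w.
exists u, z; split => // y yz; apply/negPn/negP => nxy.
move/treqP: H => /(_ x y nxy); rewrite /wproj filter_cat filter_rcons /= !eqxx /=.
(* the projection of [w] onto {x, y} would end with [y], that of [rcons v x] with [x] *)
move=> /(congr1 (last x)); rewrite last_rcons last_cat /=.
have Al : all (pred1 y) [seq t <- z | pred2 x y t].
  apply/allP => t; rewrite mem_filter => /andP [/orP [] /eqP -> tz] //=.
  by move: Nz => /hasPn /(_ _ tz); rewrite /= eqxx.
have : y \in [seq t <- z | pred2 x y t] by rewrite mem_filter /= eqxx orbT yz.
case/lastP: {Al}[seq _ <- _ | _] (Al) => // s c; rewrite all_rcons last_rcons.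
move=> /andP [/eqP -> _] _ Eyx; move: Nz => /hasPn /(_ y yz).
by rewrite -Eyx /= eqxx.
Qed.

Lemma treq_rcons_adj q p a p' b :
  treq q (rcons p a) -> treq q (rcons p' b) -> a != b -> e a b.
Proof.
move=> H1 H2 nab; apply/negPn/negP => nab'.
have /treqP/(_ a b nab') : treq (rcons p a) (rcons p' b).
  by apply: treq_trans H2; rewrite treq_sym.
rewrite /wproj !filter_rcons /= !eqxx orbT /= => /rcons_inj [_ Eab].
by rewrite Eab eqxx in nab.
Qed.

Lemma treq_move_last q p s p' b :
  treq q (p ++ s) -> treq q (rcons p' b) -> b \notin s ->
  exists p'', treq q (p'' ++ rcons s b).
Proof.
move=> H1 H2 bs.
have H : treq (p ++ s) (rcons p' b) by apply: treq_trans H2; rewrite treq_sym.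
have [u [z [E Hz]]] := treq_rcons_split H.
have [z' [Ep Ez]] := cat_split_notin E bs; subst p z.
exists (u ++ z'); apply: (treq_trans H1).
rewrite -!catA /= -rcons_cat; apply: treq_catl.
exact: treq_cons_rcons.
Qed.

Inductive swaps : seq 'I_n -> seq 'I_n -> Prop :=
| swaps_refl w : swaps w w
| swaps_step u v a b : e a b -> swaps (u ++ a :: b :: v) (u ++ b :: a :: v)
| swaps_trans w1 w2 w3 : swaps w1 w2 -> swaps w2 w3 -> swaps w1 w3.

Lemma swaps_catl u v v' : swaps v v' -> swaps (u ++ v) (u ++ v').
Proof.
elim=> [w|u0 v0 a b eab|w1 w2 w3 _ IH1 _ IH2]; first exact: swaps_refl.
  by rewrite !catA; apply: swaps_step.
exact: swaps_trans IH1 IH2.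
Qed.

Lemma swaps_catr u u' v : swaps u u' -> swaps (u ++ v) (u' ++ v).
Proof.
elim=> [w|u0 v0 a b eab|w1 w2 w3 _ IH1 _ IH2]; first exact: swaps_refl.
  by rewrite -!catA /=; apply: swaps_step.
exact: swaps_trans IH1 IH2.
Qed.

Lemma swaps_cons_rcons b s : {in s, forall y, e b y} -> swaps (b :: s) (rcons s b).
Proof.
elim: s => [|c s IH] Hs /=; first exact: swaps_refl.
apply: (swaps_trans (swaps_step [::] s (Hs c (mem_head _ _)))).
by apply: (swaps_catl [:: c]); apply: IH => y ys; apply: Hs; rewrite inE ys orbT.
Qed.

Lemma swaps_size w w' : swaps w w' -> size w = size w'.
Proof. by elim=> // [u v a b _|w1 w2 w3 _ -> _ ->] //; rewrite !size_cat. Qed.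

Lemma treq_swaps w w' : treq w w' -> swaps w w'.
Proof.
elim/last_ind: w' w => [|v x IH] w H.
  by move: (treq_size H) => /size0nil ->; apply: swaps_refl.
have [u [z [Ew Hz]]] := treq_rcons_split H; subst w.
apply: (swaps_trans (swaps_catl u (swaps_cons_rcons Hz))).
rewrite -!cats1 catA; apply/swaps_catr/IH/(@treq_catIr _ _ [:: x]).
rewrite !cats1; apply: (treq_trans _ H); rewrite rcons_cat treq_sym.
exact/treq_catl/treq_cons_rcons.
Qed.

Lemma swaps_treq w w' : swaps w w' -> treq w w'.
Proof.
elim=> [w0|u v a b eab|w1 w2 w3 _ H1 _ H2]; first exact: treq_refl.
  apply: treq_catl; rewrite -[a :: b :: v]/([:: a; b] ++ v) -[b :: a :: v]/([:: b; a] ++ v).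
  by apply/treq_cat/treq_refl/(treq_cons_rcons (s := [:: b])) => y /[!inE] /eqP ->.
exact: treq_trans H1 H2.
Qed.

Lemma word_step_swaps m (t t' : m.-tuple 'I_n) : word_step e t t' -> swaps t t'.
Proof.
move=> /existsP [k /andP [Hs /eqP ->]]; move: Hs; rewrite /swappable_at /swap_at.
case E: (drop k t) => [|a [|b r]] // eab.
rewrite -[X in swaps X _](cat_take_drop k t) E -(add2n k) -drop_drop E /= take0 drop0.
exact: swaps_step.
Qed.

Lemma swaps_connect m w w' : swaps w w' -> forall t t' : m.-tuple 'I_n,
  val t = w -> val t' = w' -> connect (@word_step n e m) t t'.
Proof.
elim=> [w0|u v a b eab|w1 w2 w3 S1 IH1 S2 IH2] t t' Et Et'.
- by rewrite (val_inj (etrans Et (esym Et'))).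
- apply: connect1; apply/existsP.
  have Hk : size u < m by rewrite -(size_tuple t) Et size_cat /= addnS ltnS leq_addr.
  exists (Ordinal Hk); rewrite /swappable_at /swap_at /= Et Et'.
  rewrite drop_size_cat // eab /= take_size_cat // -add2n -drop_drop.
  by rewrite drop_size_cat //= take0 drop0.
- have Hs : size w2 == m by rewrite -(swaps_size S1) -Et size_tuple.
  exact: connect_trans (IH1 t (Tuple Hs) Et erefl) (IH2 (Tuple Hs) t' erefl Et').
Qed.

Lemma treq_connect m (t t' : m.-tuple 'I_n) :
  treq t t' = connect (@word_step n e m) t t'.
Proof.
apply/idP/idP => [/treq_swaps S|]; first exact: swaps_connect S _ _ erefl erefl.
case/connectP=> p; elim: p t => [|t2 p IH] t /= => [_ ->|/andP [st pt] E].
  exact: treq_refl.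
exact: treq_trans (swaps_treq (word_step_swaps st)) (IH _ pt E).
Qed.

End TraceEquivalence.

Local Open Scope ring_scope.

Lemma setUDK (T : finType) (A B : {set T}) : A \subset B -> A :|: (B :\: A) = B.
Proof.
move=> /subsetP AB; apply/setP => x; rewrite !inE.
by case: (boolP (x \in A)) => [/AB->|].
Qed.

Section SignedSums.
Variables (T : finType) (R : numDomainType).
Implicit Types (a : T) (K L U : {set T}).

Definition toggle a K := if a \in K then K :\ a else a |: K.

Lemma toggleK a : involutive (toggle a).
Proof.
move=> K; rewrite /toggle; case aK: (a \in K); first by rewrite setD11 setD1K.
by rewrite setU11 setU1K ?aK.
Qed.

Lemma sign_toggle a K : (-1) ^+ #|toggle a K| = - (-1) ^+ #|K| :> R.
Proof.
rewrite /toggle; case: ifP => aK; last by rewrite cardsU1 aK exprS mulN1r.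
by rewrite [in RHS](cardsD1 a K) aK exprS mulN1r opprK.
Qed.

Lemma toggle_sub a K L : a \in L -> (toggle a K \subset L) = (K \subset L).
Proof.
move=> aL; rewrite /toggle; case: ifP => aK.
  by rewrite subDset (setUidPr _) // sub1set.
by rewrite subUset sub1set aL.
Qed.

Lemma sub_toggle a U K : a \notin U -> (U \subset toggle a K) = (U \subset K).
Proof.
move=> aU; rewrite /toggle; case: ifP => aK.
  by rewrite subsetD1 aU andbT.
apply/idP/idP => [UaK|/subset_trans-> //]; last exact: subsetUr.
apply/subsetP => x xU; move: (subsetP UaK x xU) => /setU1P [xa|//].
by rewrite -xa xU in aU.
Qed.

Lemma setD_toggle a K L : a \in L -> L :\: toggle a K = toggle a (L :\: K).
Proof.
move=> aL; rewrite /toggle in_setD aL andbT; case aK: (a \in K) => /=;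
  apply/setP => x; rewrite !inE; case: (eqVneq x a) => [->|] //=; by rewrite ?aK ?aL.
Qed.

Lemma sum_toggle_eq0 (P : pred {set T}) (F : {set T} -> R) a :
  (forall K, P (toggle a K) = P K) -> (forall K, P K -> F (toggle a K) = - F K) ->
  \sum_(K | P K) F K = 0.
Proof.
move=> HP HF; have E : \sum_(K | P K) F K = - \sum_(K | P K) F K.
  rewrite {1}(reindex_inj (inv_inj (toggleK a))) /= -sumrN.
  by apply: eq_big => K; [rewrite HP | rewrite HP => PK; rewrite HF].
by move/eqP: E; rewrite -addr_eq0 -mulr2n mulrn_eq0 => /eqP.
Qed.

Lemma sum_sign_subset L :
  \sum_(U : {set T} | U \subset L) (-1) ^+ #|U| = (L == set0)%:R :> R.
Proof.
have [->|[a aL]] := set_0Vmem L.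
  by rewrite eqxx (big_pred1 set0) ?cards0 // => U /=; rewrite subset0.
have /negbTE-> : L != set0 by apply/set0Pn; exists a.
by apply: (sum_toggle_eq0 (a := a)) => K; rewrite ?toggle_sub // => _; rewrite sign_toggle.
Qed.

Lemma sum_sign_interval U L :
  \sum_(K : {set T} | (U \subset K) && (K \subset L)) (-1) ^+ #|L :\: K| = (U == L)%:R :> R.
Proof.
have [<-|nUL] := eqVneq U L.
  rewrite (big_pred1 U) ?setDv ?cards0 // => K /=.
  by rewrite eq_sym eqEsubset andbC.
have [UL|nUL'] := boolP (U \subset L); last first.
  by rewrite big_pred0 // => K; apply: contraNF nUL' => /andP [/subset_trans]; apply.
have [a /setDP [aL aU]] : exists a, a \in L :\: U.
  by apply/set0Pn; rewrite setD_eq0; apply: contra nUL => LU; rewrite eqEsubset UL.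
apply: (sum_toggle_eq0 (a := a)) => K; first by rewrite sub_toggle // toggle_sub.
by move=> _; rewrite setD_toggle // sign_toggle.
Qed.

End SignedSums.

Section Cliques.
Variables (n : nat) (e : rel 'I_n).
Hypotheses (e_sym : symmetric e) (e_irr : irreflexive e).
Implicit Types A K L U W : {set 'I_n}.

Lemma cliqueP (U : {set 'I_n}) :
  reflect {in U &, forall i j, i != j -> e i j} (is_clique e U).
Proof.
apply: (iffP forall_inP) => [H i j iU jU | H i iU].
  by move: (H i iU) => /forall_inP /(_ j jU) /implyP.
by apply/forall_inP => j jU; apply/implyP; apply: H.
Qed.

Lemma clique0 : is_clique e set0.
Proof. by apply/cliqueP => i j; rewrite in_set0. Qed.

Lemma clique_sub (U K : {set 'I_n}) : U \subset K -> is_clique e K -> is_clique e U.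
Proof. by move=> /subsetP UK /cliqueP cK; apply/cliqueP => i j /UK iK /UK; apply: cK. Qed.

Lemma nbhd_sub A K : nbhd_in e A K \subset A.
Proof. by apply/subsetP => j; rewrite inE => /andP []. Qed.

Lemma nbhd_adj A K j k : j \in nbhd_in e A K -> k \in K -> e j k.
Proof. by rewrite inE => /andP [_ /forall_inP]; apply. Qed.

Lemma nbhd_notin A K j : j \in nbhd_in e A K -> j \notin K.
Proof. by move=> jN; apply/negP => /(nbhd_adj jN); rewrite e_irr. Qed.

Lemma clique_setD_nbhd A K L : is_clique e L -> L \subset A -> K \subset L ->
  L :\: K \subset nbhd_in e A K.
Proof.
move=> /cliqueP cL /subsetP LA /subsetP KL; apply/subsetP => y /setDP [yL yK].
rewrite inE LA //=; apply/forall_inP => k kK; apply: cL => //; first exact: KL.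
by apply: contraNneq yK => ->.
Qed.

Lemma setD_nbhd_sub A K L : K \subset A -> L :\: K \subset nbhd_in e A K ->
  L \subset A.
Proof.
move=> KA /subset_trans/(_ (nbhd_sub A K)) LKA; rewrite -(setID L K) subUset LKA.
by rewrite (subset_trans (subsetIr L K)).
Qed.

Lemma clique_nbhdU A K U : is_clique e K -> U \subset nbhd_in e A K ->
  is_clique e (K :|: U) = is_clique e U.
Proof.
move=> cK /subsetP UN; apply/idP/idP => [|/cliqueP cU]; first exact/clique_sub/subsetUr.
apply/cliqueP => i j /setUP [iK|iU] /setUP [jK|jU] nij.
- by move/cliqueP: cK; apply.
- by rewrite e_sym; apply: nbhd_adj (UN j jU) iK.
- exact: nbhd_adj (UN i iU) jK.
- exact: cU.
Qed.

Lemma nbhd_setUE A K L W :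
  (W \subset nbhd_in e A K) && (K :|: W == L) =
  [&& K \subset L, L :\: K \subset nbhd_in e A K & W == L :\: K].
Proof.
apply/idP/idP => [/andP [WN /eqP <-]|/and3P [KL LKN /eqP ->]].
  have -> : (K :|: W) :\: K = W.
    apply/setP => x; rewrite in_setD in_setU andb_orr andNb /=.
    by apply: andb_idl => /(subsetP WN)/nbhd_notin.
  by rewrite subsetUl WN eqxx.
by rewrite LKN (setUDK KL) eqxx.
Qed.

Definition clique_number_in (S : {set 'I_n}) :=
  \max_(K : {set 'I_n} | is_clique e K && (K \subset S)) #|K|.

Lemma clique_number_in_witness (S : {set 'I_n}) :
  exists K, [/\ is_clique e K, K \subset S & #|K| = clique_number_in S].
Proof.
have P0 : is_clique e set0 && (set0 \subset S) by rewrite clique0 sub0set.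
have [K /andP [cK KS] Kmax] :=
  @arg_maxnP _ set0 (fun K => is_clique e K && (K \subset S)) (fun K => #|K|) P0.
exists K; split => //; apply/eqP; rewrite eqn_leq.
have -> : (#|K| <= clique_number_in S)%N by apply: leq_bigmax_cond; rewrite cK KS.
by apply/bigmax_leqP.
Qed.

Lemma clique_number_inT : clique_number_in setT = clique_number e.
Proof. by apply: eq_bigl => K; rewrite subsetT andbT. Qed.

Lemma clique_number_inD A (S : {set 'I_n}) :
  A \subset S -> {in A & ~: A, forall a b, e a b} ->
  (clique_number_in A + clique_number_in (S :\: A) <= clique_number_in S)%N.
Proof.
move=> AS AdjA.
have [KA [/cliqueP cA KAA <-]] := clique_number_in_witness A.
have [KB [/cliqueP cB KBB <-]] := clique_number_in_witness (S :\: A).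
have KBnA x : x \in KB -> x \in ~: A by move/(subsetP KBB); rewrite !inE => /andP [].
have disj : KA :&: KB = set0.
  apply/setP => x; rewrite !inE; apply/andP => -[/(subsetP KAA) xA /KBnA].
  by rewrite inE xA.
rewrite -cardsUI disj cards0 addn0; apply: leq_bigmax_cond; apply/andP; split.
  apply/cliqueP => i j /setUP [iA|iB] /setUP [jA|jB]; [exact: cA| | |exact: cB].
  - by move=> _; apply: AdjA (subsetP KAA i iA) (KBnA j jB).
  - by move=> _; rewrite e_sym; apply: AdjA (subsetP KAA j jA) (KBnA i iB).
by rewrite subUset (subset_trans KAA AS) (subset_trans KBB (subsetDl S A)).
Qed.

Lemma compl_connect_sym : connect_sym (compl_rel e).
Proof. by apply: sym_connect_sym => i j; rewrite /compl_rel eq_sym e_sym. Qed.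

Lemma compl_component_closed v : closed (compl_rel e) (compl_component e v).
Proof. by move=> x y exy; rewrite !inE; apply: (connect_closed compl_connect_sym). Qed.

Lemma compl_component_joined v :
  {in compl_component e v & ~: compl_component e v, forall a b, e a b}.
Proof.
move=> a b aA; rewrite inE => bA; apply/negPn/negP => nab.
have ab : compl_rel e a b by rewrite /compl_rel nab andbT; apply: contraNneq bA => <-.
by move: bA; rewrite -(compl_component_closed v ab) aA.
Qed.

End Cliques.

Section LastLetters.
Variables (n : nat) (e : rel 'I_n).
Hypotheses (e_sym : symmetric e) (e_irr : irreflexive e).
Local Notation treq := (treq e).

Lemma treq_enum_rcons (U : {set 'I_n}) a : is_clique e U -> a \in U ->
  treq (enum U) (rcons (enum (U :\ a)) a).
Proof.
move=> /cliqueP cU aU; apply: treq_clique => [|x y]; last by rewrite !mem_enum; apply: cU.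
apply: uniq_perm; rewrite ?rcons_uniq ?mem_enum ?setD11 ?enum_uniq // => x.
by rewrite mem_rcons inE !mem_enum in_setD1; case: eqVneq => // ->.
Qed.

Definition last_letters (q : seq 'I_n) : {set 'I_n} :=
  [set a | [exists p : (size q).-1.-tuple 'I_n, treq q (rcons p a)]].

Lemma last_lettersP q a :
  reflect (exists p, treq q (rcons p a)) (a \in last_letters q).
Proof.
rewrite inE; apply: (iffP existsP) => [[p Hp]|[p Hp]]; first by exists p.
have Hs : size p == (size q).-1 by rewrite (treq_size e_irr Hp) size_rcons.
by exists (Tuple Hs).
Qed.

Lemma last_letters_clique q : is_clique e (last_letters q).
Proof.
apply/cliqueP => a b /last_lettersP [p Ha] /last_lettersP [p' Hb].
exact: treq_rcons_adj Ha Hb.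
Qed.

Lemma suffix_last_letters q p (U : {set 'I_n}) : is_clique e U ->
  treq q (p ++ enum U) -> U \subset last_letters q.
Proof.
move=> cU H; apply/subsetP => a aU; apply/last_lettersP.
exists (p ++ enum (U :\ a)); apply: (treq_trans H).
by rewrite rcons_cat; apply/treq_catl/treq_enum_rcons.
Qed.

Lemma last_letters_suffix q (U : {set 'I_n}) :
  U \subset last_letters q -> exists p, treq q (p ++ enum U).
Proof.
move: {2}#|U| (erefl #|U|) => k; elim: k U => [|k IH] U cU UL.
  by rewrite (cards0_eq cU) enum_set0; exists q; rewrite cats0 treq_refl.
have [b bU] : exists b, b \in U by apply/card_gt0P; rewrite cU.
have [p Hp] : exists p, treq q (p ++ enum (U :\ b)).
  apply: IH (subset_trans (subsetDl _ _) UL).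
  by move: cU; rewrite (cardsD1 b U) bU => [[]].
have [p' Hp'] := last_lettersP _ _ (subsetP UL b bU).
have bU' : b \notin enum (U :\ b) by rewrite mem_enum setD11.
have [p'' Hp''] := treq_move_last e_sym e_irr Hp Hp' bU'.
exists p''; apply: (treq_trans Hp''); apply: treq_catl; rewrite treq_sym.
exact/treq_enum_rcons/bU/(clique_sub UL (last_letters_clique q)).
Qed.

Lemma clique_suffixE m q (U : {set 'I_n}) : is_clique e U -> size q = m ->
  (#|U| <= m)%N && [exists p : (m - #|U|).-tuple 'I_n, treq q (p ++ enum U)]
  = (U \subset last_letters q).
Proof.
move=> cU Hq; apply/idP/idP => [/andP [_ /existsP [p]]|UL].
  exact: suffix_last_letters.
have [p Hp] := last_letters_suffix UL.
have Hm : m = (size p + #|U|)%N by rewrite -Hq (treq_size e_irr Hp) size_cat cardE.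
have Hs : size p == (m - #|U|)%N by rewrite Hm addnK.
by rewrite {1}Hm leq_addl; apply/existsP; exists (Tuple Hs).
Qed.

(* The last occurrence in [q] of a letter of [A] commutes with everything after it. *)
Lemma last_letters_meet0 (A : {set 'I_n}) q :
  {in A & ~: A, forall a b, e a b} ->
  (last_letters q :&: A == set0) = ~~ has [in A] q.
Proof.
move=> AdjA; apply/idP/idP => [/eqP L0|/hasPn NA]; last first.
  apply/eqP/setP => a; rewrite in_setI in_set0; apply/negbTE/negP.
  case/andP=> /last_lettersP [p Hp] aA.
  by move: (NA a); rewrite (treq_mem e_irr _ Hp) mem_rcons mem_head aA => /(_ isT).
apply/negP => /has_last_split [u [x [z [Eq xA Nz]]]].
suff : x \in last_letters q :&: A by rewrite L0 in_set0.
rewrite in_setI xA andbT; apply/last_lettersP; exists (u ++ z).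
rewrite Eq rcons_cat; apply/treq_catl/treq_cons_rcons => // y yz.
by apply: AdjA xA _; rewrite inE (hasPn Nz y yz).
Qed.

Variable R : numFieldType.

Lemma sum_sign_clique_suffix (A : {set 'I_n}) m (q : m.-tuple 'I_n) :
  {in A & ~: A, forall a b, e a b} ->
  \sum_(U : {set 'I_n} | is_clique e U && (U \subset A))
     (if (#|U| <= m)%N then (-1) ^+ #|U| *
        ([exists p : (m - #|U|).-tuple 'I_n, treq q (p ++ enum U)])%:R else 0)
  = (~~ has [in A] q)%:R :> R.
Proof.
move=> AdjA; rewrite -(last_letters_meet0 q AdjA) -sum_sign_subset.
rewrite big_mkcond [RHS]big_mkcond; apply: eq_bigr => U _ /=.
rewrite subsetI; have [UA|] := boolP (U \subset A); rewrite ?andbF ?andbT; last first.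
  by case: (_ \subset _).
have [cU|ncU] := boolP (is_clique e U); last first.
  by rewrite (contraNF (fun UL => clique_sub UL (last_letters_clique q)) ncU).
rewrite -(clique_suffixE cU (size_tuple q)).
by case: (_ <= _)%N; case: [exists _, _]; rewrite /= ?mulr1 ?mulr0.
Qed.

End LastLetters.

Section TraceSums.
Variables (n : nat) (e : rel 'I_n).
Hypotheses (e_sym : symmetric e) (e_irr : irreflexive e).
Variable R : numFieldType.
Local Notation treq := (treq e).

Definition class_size k (w : seq 'I_n) : nat := #|[set t : k.-tuple 'I_n | treq t w]|.

(* For [f] constant on classes, the sum of [f] over the elements of length [k]
   of the monoid generated by [S]: each class contributes [class_size] copies
   of [f w / class_size]. *)
Definition trace_sum k (S : {set 'I_n}) (f : seq 'I_n -> R) : R :=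
  \sum_(t : k.-tuple 'I_n | all [in S] t) f t / (class_size k t)%:R.

Lemma class_size_treq k w w' : treq w w' -> class_size k w = class_size k w'.
Proof.
move=> H; apply: eq_card => t; rewrite !inE.
by apply/idP/idP => /treq_trans; apply; rewrite // treq_sym.
Qed.

Lemma sum_class k w (c : R) : size w = k ->
  \sum_(t : k.-tuple 'I_n | treq t w) c / (class_size k t)%:R = c.
Proof.
move=> /eqP Hw.
rewrite (eq_bigr (fun=> c / (class_size k w)%:R)) => [|t /class_size_treq -> //].
rewrite (eq_bigl [in [set t : k.-tuple 'I_n | treq t w]]) => [|t]; last by rewrite inE.
rewrite sumr_const -[#|_|]/(class_size k w) -[X in X = c]mulr_natr mulfVK //.
rewrite pnatr_eq0 -lt0n.
by apply/card_gt0P; exists (Tuple Hw); rewrite inE treq_refl.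
Qed.

Lemma eq_trace_sum k (S : {set 'I_n}) (f g : seq 'I_n -> R) : f =1 g ->
  trace_sum k S f = trace_sum k S g.
Proof. by move=> fg; apply: eq_bigr => t _; rewrite fg. Qed.

Lemma trace_sum_ge0 k (S : {set 'I_n}) (f : seq 'I_n -> R) : (forall w, 0 <= f w) ->
  0 <= trace_sum k S f.
Proof. by move=> f_ge0; apply: sumr_ge0 => t _; rewrite divr_ge0 ?ler0n. Qed.

Lemma trace_sum_sum k (S : {set 'I_n}) (I : finType) (P : pred I) (g : I -> seq 'I_n -> R) :
  trace_sum k S (fun w => \sum_(i | P i) g i w) = \sum_(i | P i) trace_sum k S (g i).
Proof.
rewrite /trace_sum exchange_big /=; apply: eq_bigr => t _.
by rewrite mulr_suml.
Qed.

Lemma trace_sum_set0 k (f : seq 'I_n -> R) :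
  trace_sum k set0 f = if k == 0%N then f [::] else 0.
Proof.
rewrite /trace_sum; case: k => [|k]; last first.
  by rewrite big_pred0 // => -[[|x s] //]; rewrite /= in_set0.
rewrite (big_pred1 [tuple]) => [|t]; last by rewrite tuple0.
suff -> : class_size 0 [tuple] = 1%N by rewrite divr1.
by apply: (@eq_card1 _ [tuple]) => t; rewrite tuple0 inE treq_refl; apply/esym/eqP.
Qed.

Variable f : seq 'I_n -> R.
Hypothesis f_treq : forall w w', treq w w' -> f w = f w'.

Lemma sum_treq_suffix k (S : {set 'I_n}) (s q : seq 'I_n) : all [in S] s ->
  \sum_(p : k.-tuple 'I_n | all [in S] p && treq q (p ++ s)) (class_size k p)%:R^-1
  = (all [in S] q && [exists p : k.-tuple 'I_n, treq q (p ++ s)])%:R :> R.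
Proof.
move=> Ss; case: (boolP [exists p : k.-tuple 'I_n, treq q (p ++ s)]); last first.
  by move=> /existsPn N; rewrite andbF big_pred0 // => p; rewrite (negbTE (N p)) andbF.
move=> /existsP [p0 H0].
have Eq (p : k.-tuple 'I_n) : treq q (p ++ s) = treq p p0.
  apply/idP/idP => [H|/treq_cat/(_ (treq_refl e s)) H]; last first.
    by apply: treq_trans H0 _; rewrite treq_sym.
  by apply: (@treq_catIr _ _ _ _ s); rewrite treq_sym (treq_trans _ H) // treq_sym.
have Sq : all [in S] q = all [in S] p0.
  by rewrite (perm_all _ (treq_perm e_irr H0)) all_cat Ss andbT.
have Sp (p : k.-tuple 'I_n) : treq p p0 -> all [in S] p = all [in S] p0.
  by move/(treq_perm e_irr)/perm_all.
case Sp0: (all [in S] p0); rewrite Sq Sp0 /=; last first.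
  rewrite big_pred0 // => p; rewrite Eq.
  by case: (boolP (treq p p0)) => [/Sp->|]; rewrite ?Sp0 ?andbF.
rewrite (eq_bigl (fun p : k.-tuple 'I_n => treq p p0)) => [|p]; last first.
  by rewrite Eq andb_idl // => /Sp->.
by rewrite -[RHS](sum_class 1 (size_tuple p0)); apply: eq_bigr => p _; rewrite mul1r.
Qed.

Lemma trace_sum_suffix k m (S : {set 'I_n}) (s : seq 'I_n) :
  (k + size s = m)%N -> all [in S] s ->
  trace_sum k S (fun p => f (p ++ s)) =
  \sum_(q : m.-tuple 'I_n | all [in S] q)
     f q / (class_size m q)%:R * ([exists p : k.-tuple 'I_n, treq q (p ++ s)])%:R.
Proof.
move=> Hm Ss; rewrite [RHS]big_mkcond /trace_sum.
have Ef (p : k.-tuple 'I_n) : f (p ++ s) / (class_size k p)%:R =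
    \sum_(q : m.-tuple 'I_n) if treq q (p ++ s)
      then f q / (class_size m q)%:R / (class_size k p)%:R else 0.
  have Hs : size (p ++ s) = m by rewrite size_cat size_tuple.
  rewrite -big_mkcond -[in LHS](sum_class (f (p ++ s)) Hs) mulr_suml /=.
  by apply: eq_bigr => q /f_treq ->.
rewrite (eq_bigr _ (fun p _ => Ef p)) exchange_big /=; apply: eq_bigr => q _.
rewrite -big_mkcondr -mulr_sumr sum_treq_suffix //.
by case: (all _ q); rewrite ?mulr0.
Qed.

Lemma trace_sum_avoid (A S : {set 'I_n}) m :
  A \subset S -> {in A & ~: A, forall a b, e a b} ->
  \sum_(U : {set 'I_n} | is_clique e U && (U \subset A))
     (if (#|U| <= m)%N
      then (-1) ^+ #|U| * trace_sum (m - #|U|) S (fun p => f (p ++ enum U)) else 0)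
  = trace_sum m (S :\: A) f.
Proof.
move=> AS AdjA.
under eq_bigr => U /andP [_ UA].
  rewrite (_ : (if _ then _ else _) = \sum_(q : m.-tuple 'I_n | all [in S] q)
    f q / (class_size m q)%:R * (if (#|U| <= m)%N then (-1) ^+ #|U| *
      ([exists p : (m - #|U|).-tuple 'I_n, treq q (p ++ enum U)])%:R else 0)); last first.
    case: ifP => Hle; last by rewrite big1 // => q _; rewrite mulr0.
    rewrite (trace_sum_suffix (m := m)) ?mulr_sumr.
    - by apply: eq_bigr => q _; rewrite mulrCA.
    - by rewrite -cardE subnK.
    by apply/allP => x; rewrite mem_enum => /(subsetP UA) /(subsetP AS).
  over.
rewrite exchange_big /= /trace_sum big_mkcond [RHS]big_mkcond; apply: eq_bigr => q _.
have -> : all [in S :\: A] q = all [in S] q && ~~ has [in A] q.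
  by rewrite -all_predC -all_predI; apply: eq_all => x; rewrite /= in_setD andbC.
case: ifP => Sq; rewrite -?mulr_sumr ?(sum_sign_clique_suffix e_sym e_irr R q AdjA) //=.
by case: (has _ _); rewrite ?mulr1 ?mulr0.
Qed.

Lemma sum_roots_trace_sum m :
  \sum_(w : m.-tuple 'I_n | fingraph.root (@word_step n e m) w == w) f w =
  trace_sum m setT f.
Proof.
have csym : connect_sym (@word_step n e m).
  by move=> x y; rewrite -!(treq_connect e_sym e_irr) treq_sym.
have Eroot (t r : m.-tuple 'I_n) : fingraph.root (@word_step n e m) r = r ->
    (fingraph.root (@word_step n e m) t == r) = treq t r.
  move=> Hr; rewrite (treq_connect e_sym e_irr).
  apply/eqP/idP => [Ht|/(fingraph.rootP csym)->//]; apply/(fingraph.rootP csym).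
  by rewrite Ht Hr.
rewrite /trace_sum [RHS](eq_bigl xpredT) => [|t]; last by apply/allP => x; rewrite inE.
rewrite [RHS](partition_big (fingraph.root (@word_step n e m))
  (fun r => fingraph.root (@word_step n e m) r == r)) => [|t _]; last first.
  by rewrite (root_root csym).
apply: eq_bigr => r /eqP Hr.
rewrite (eq_big (fun t : m.-tuple 'I_n => treq t r) (fun t => f r / (class_size m t)%:R)).
- by rewrite sum_class ?size_tuple.
- by move=> t; rewrite Eroot.
by move=> t; rewrite Eroot // => /f_treq ->.
Qed.

End TraceSums.

Lemma hockey_stick w m : (\sum_(i < m.+1) 'C(w + i - 1, i) = 'C(w + m, m))%N.
Proof.
elim: m => [|m IH]; first by rewrite big_ord1 !bin0.
by rewrite big_ord_recr /= IH !addnS subn1 /= binS addnC.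
Qed.

Section PartialSums.
Variable R : numDomainType.
Implicit Types x y : nat -> R.

Definition psum x : nat -> R := fun m => \sum_(i < m.+1) x i.

Lemma eq_psum x y : x =1 y -> psum x =1 psum y.
Proof. by move=> xy m; apply: eq_bigr => i _. Qed.

Lemma eq_iter_psum j x y : x =1 y -> iter j psum x =1 iter j psum y.
Proof. by elim: j => //= j IH /IH /eq_psum. Qed.

Lemma psum_telescope y : psum (fun m => y m - (if m is m'.+1 then y m' else 0)) =1 y.
Proof.
rewrite /psum; elim=> [|m IH]; first by rewrite big_ord1 subr0.
by rewrite big_ord_recr /= IH addrC subrK.
Qed.

Lemma iter_psum_ge0 j x : (forall m, 0 <= x m) -> forall m, 0 <= iter j psum x m.
Proof. by elim: j => //= j IH /IH x_ge0 m; apply: sumr_ge0. Qed.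

Lemma iter_psum_ge j x : (forall m, 0 <= x m) -> forall m, x m <= iter j psum x m.
Proof.
move=> x_ge0; elim: j => //= j IH m; apply: le_trans (IH m) _.
by rewrite /psum big_ord_recr lerDr sumr_ge0 // => i _; apply: iter_psum_ge0.
Qed.

Lemma iter_psum_le j x y : (forall m, x m <= y m) ->
  forall m, iter j psum x m <= iter j psum y m.
Proof. by elim: j => //= j IH /IH xy m; apply: ler_sum. Qed.

Lemma iter_psum_mono j j' x : (forall m, 0 <= x m) -> (j <= j')%N ->
  forall m, iter j psum x m <= iter j' psum x m.
Proof.
move=> x_ge0 le_jj' m; rewrite -(subnK le_jj') iterD.
by apply: iter_psum_ge; apply: iter_psum_ge0.
Qed.

Lemma iter_psum_sum (I : finType) (P : pred I) (g : I -> nat -> R) j m :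
  iter j psum (fun k => \sum_(i | P i) g i k) m = \sum_(i | P i) iter j psum (g i) m.
Proof.
elim: j m => //= j IH m; rewrite /psum (eq_bigr _ (fun (i : 'I_m.+1) _ => IH i)).
by rewrite exchange_big.
Qed.

Definition dirac0 (c : R) k : R := if k == 0%N then c else 0.

Lemma dirac0_ge0 c k : 0 <= c -> 0 <= dirac0 c k.
Proof. by rewrite /dirac0; case: ifP. Qed.

Lemma iter_psum_dirac0 (c : R) w m :
  iter w psum (dirac0 c) m = ('C(w + m - 1, m))%:R * c.
Proof.
elim: w m => [|w IH] m /=.
  by case: m => [|m]; rewrite ?bin0 ?mul1r // add0n subn1 bin_small ?mul0r.
rewrite /psum (eq_bigr _ (fun (i : 'I_m.+1) _ => IH i)) -mulr_suml -natr_sum.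
by rewrite hockey_stick addSn subn1.
Qed.

Variable T : finType.

(* [(1 - shift) ^ #|K|] applied to [x], expanded over the subsets of [K]. *)
Definition fdiff (K : {set T}) x : nat -> R := fun m =>
  \sum_(U : {set T} | U \subset K)
     (if (#|U| <= m)%N then (-1) ^+ #|U| * x (m - #|U|)%N else 0).

Lemma fdiff_set0 x : fdiff set0 x =1 x.
Proof.
move=> m; rewrite /fdiff (big_pred1 set0) => [|U]; last by rewrite /= subset0.
by rewrite cards0 expr0 mul1r subn0.
Qed.

Lemma fdiffD1 (K : {set T}) a x m : a \in K ->
  fdiff K x m = fdiff (K :\ a) x m - (if m is m'.+1 then fdiff (K :\ a) x m' else 0).
Proof.
move=> aK; rewrite /fdiff (bigID (fun U : {set T} => a \in U)) /= addrC.
congr (_ + _); first by apply: eq_bigl => U; rewrite subsetD1.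
rewrite (reindex_inj (inv_inj (toggleK a))) /=.
rewrite (eq_bigl (fun U : {set T} => U \subset K :\ a)) => [|U]; last first.
  rewrite toggle_sub // subsetD1 /toggle.
  by case: (a \in U); rewrite /= ?setD11 ?setU11 ?andbF ?andbT.
case: m => [|m] /=; first by rewrite oppr0 big1 // => U /[!subsetD1] /andP [_ aU];
  rewrite /toggle (negbTE aU) cardsU1 aU.
rewrite -sumrN; apply: eq_bigr => U /[!subsetD1] /andP [_ aU].
rewrite /toggle (negbTE aU) cardsU1 aU /= add1n ltnS subSS.
by case: ifP => _; rewrite ?oppr0 // exprS mulN1r mulNr.
Qed.

Lemma iter_psum_fdiff (K : {set T}) x : iter #|K| psum (fdiff K x) =1 x.
Proof.
move Ek: #|K| => k; elim: k K Ek => [|k IH] K cK.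
  by rewrite (cards0_eq cK); apply: fdiff_set0.
have [a aK] : exists a, a \in K by apply/card_gt0P; rewrite cK.
have cK' : #|K :\ a| = k by move: cK; rewrite (cardsD1 a K) aK add1n => [[]].
rewrite iterSr => m; rewrite -(IH _ cK' m); apply: eq_iter_psum => {}m.
by rewrite (eq_psum (fun k => fdiffD1 x k aK)) psum_telescope.
Qed.

End PartialSums.
Arguments psum {R} x _.
Arguments dirac0 {R} c k.
Arguments fdiff {R T} K x _.

Section InnerProduct.
Variables (R : realType) (H : lmodType R[i]) (ip : H -> H -> R[i]).
Hypothesis ip_inner : is_inner_product ip.

Let ip_linear a x y z : ip (a *: x + y) z = a * ip x z + ip y z.
Proof. by case: ip_inner. Qed.
Let ip_conj x y : ip y x = ((ip x y)^*)%C.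
Proof. by case: ip_inner. Qed.

Lemma ip0l z : ip 0 z = 0.
Proof.
have := ip_linear 1 0 0 z; rewrite scaler0 addr0 mul1r => E.
by apply: (@addrI _ (ip 0 z)); rewrite addr0 -E.
Qed.

Lemma ipDl x y z : ip (x + y) z = ip x z + ip y z.
Proof. by rewrite -[x]scale1r ip_linear mul1r scale1r. Qed.

Lemma ipZl a x z : ip (a *: x) z = a * ip x z.
Proof. by rewrite -[a *: x]addr0 ip_linear ip0l addr0. Qed.

Lemma ipBr x y z : ip x (y - z) = ip x y - ip x z.
Proof.
rewrite (ip_conj (y - z)) (ip_conj y) (ip_conj z) ipDl -scaleN1r ipZl mulN1r.
exact: rmorphB.
Qed.

Lemma ip_suml (I : finType) (P : pred I) (F : I -> H) z :
  ip (\sum_(i | P i) F i) z = \sum_(i | P i) ip (F i) z.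
Proof. by elim/big_rec2: _ => [|i y1 y2 _ <-]; rewrite ?ip0l ?ipDl. Qed.

Definition sqnorm (x : H) : R := complex.Re (ip x x).

Lemma sqnorm_ge0 x : 0 <= sqnorm x.
Proof. by case: ip_inner => _ _ /(_ x); rewrite lecE => /andP []. Qed.

Lemma hnorm_sqr x : hnorm ip x ^+ 2 = sqnorm x.
Proof. by rewrite sqr_sqrtr ?sqnorm_ge0. Qed.

End InnerProduct.

Lemma Re_sign (R : rcfType) k (z : R[i]) :
  complex.Re ((-1) ^+ k * z) = (-1) ^+ k * complex.Re z.
Proof.
by rewrite -signr_odd -[in RHS]signr_odd; case: (odd k); rewrite ?mulN1r ?mul1r ?raddfN.
Qed.

Section GammaFamily.
Variables (R : realType) (H : lmodType R[i]) (ip : H -> H -> R[i]).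
Variables (n : nat) (e : rel 'I_n) (T Ts : 'I_n -> H -> H).
Hypotheses (ip_inner : is_inner_product ip) (e_simple : simple_graph e).
Hypothesis T_family : Gamma_family T Ts ip e.

Let e_sym : symmetric e. Proof. by case: e_simple. Qed.
Let e_irr : irreflexive e. Proof. by case: e_simple. Qed.
Let ip_def x : ip x x = 0 -> x = 0. Proof. by case: ip_inner => _ _ _; apply. Qed.
Let T_adj i : is_adjoint ip (T i) (Ts i). Proof. by case: T_family. Qed.
Let T_comm i j : e i j -> forall h, T i (T j h) = T j (T i h).
Proof. by case: T_family => _ _ _; apply. Qed.

Lemma Ts_comm a b y : e a b -> Ts a (Ts b y) = Ts b (Ts a y).
Proof.
move=> eab; apply/eqP; rewrite -subr_eq0; apply/eqP/ip_def.
set D := _ - _.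
by rewrite {2}/D ipBr // -!T_adj (T_comm eab) subrr.
Qed.

Lemma Tsword_cat w w' y : Tsword Ts (w ++ w') y = Tsword Ts w' (Tsword Ts w y).
Proof. exact: foldl_cat. Qed.

Lemma Tsword_treq w w' y : treq e w w' -> Tsword Ts w y = Tsword Ts w' y.
Proof.
move=> /(treq_swaps e_sym e_irr); elim=> // [u v a b eab|w1 w2 w3 _ -> _ ->] //.
by rewrite !Tsword_cat /= (Ts_comm _ eab).
Qed.

Lemma ip_Tword s z y : ip (Tword T s z) y = ip z (Tsword Ts s y).
Proof. by elim: s y => //= a s IH y; rewrite T_adj IH. Qed.

Definition word_sqnorm h w := sqnorm ip (Tsword Ts w h).

Lemma word_sqnorm_treq h w w' : treq e w w' -> word_sqnorm h w = word_sqnorm h w'.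
Proof. by move=> /Tsword_treq E; rewrite /word_sqnorm E. Qed.

Definition clique_sqnorm (U : {set 'I_n}) (y : H) : R :=
  if is_clique e U then sqnorm ip (Tsword Ts (enum U) y) else 0.

Lemma clique_sqnorm0 y : clique_sqnorm set0 y = sqnorm ip y.
Proof. by rewrite /clique_sqnorm clique0 enum_set0. Qed.

Lemma Re_ip_TjoinTjoinstar (U : {set 'I_n}) y :
  complex.Re (ip (TjoinTjoinstar T Ts e U y) y) = clique_sqnorm U y.
Proof.
rewrite /TjoinTjoinstar /clique_sqnorm; case: ifP => _; first by rewrite ip_Tword.
by rewrite ip0l.
Qed.

(* [brehmer_form A K] is the quadratic form of the weak Brehmer condition for
   the clique [K] of [A], precomposed with [T_K^*]. *)
Definition brehmer_form (A K : {set 'I_n}) (x : H) : R :=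
  \sum_(U : {set 'I_n} | U \subset nbhd_in e A K)
     (-1) ^+ #|U| * clique_sqnorm U (Tsword Ts (enum K) x).

Lemma clique_sqnorm_cat (A K U : {set 'I_n}) x : is_clique e K ->
  U \subset nbhd_in e A K ->
  clique_sqnorm U (Tsword Ts (enum K) x) = clique_sqnorm (K :|: U) x.
Proof.
move=> cK UN; rewrite /clique_sqnorm (clique_nbhdU e_sym cK UN).
case: ifP => cU //; rewrite -Tsword_cat; congr sqnorm.
apply: Tsword_treq.
have /cliqueP cKU : is_clique e (K :|: U) by rewrite (clique_nbhdU e_sym cK UN).
apply: treq_clique => [|y z]; last by rewrite !mem_cat !mem_enum -!in_setU; apply: cKU.
apply: uniq_perm => [||y]; rewrite ?enum_uniq //; last by rewrite mem_cat !mem_enum in_setU.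
rewrite cat_uniq !enum_uniq andbT /=; apply/hasPn => y /[!mem_enum] /(subsetP UN).
exact: nbhd_notin.
Qed.

Lemma brehmer_form_expand (A K : {set 'I_n}) x : is_clique e K ->
  brehmer_form A K x = \sum_(L : {set 'I_n})
    if (K \subset L) && (L :\: K \subset nbhd_in e A K)
    then (-1) ^+ #|L :\: K| * clique_sqnorm L x else 0.
Proof.
move=> cK; rewrite /brehmer_form.
under eq_bigr => W WN do rewrite (clique_sqnorm_cat x cK WN).
rewrite (partition_big (fun W => K :|: W) xpredT) //=; apply: eq_bigr => L _.
under eq_bigl => W do rewrite (nbhd_setUE e_irr).
case: ifP => KL; last by rewrite big_pred0 // => W; rewrite andbA KL.
rewrite (big_pred1 (L :\: K)) => [|W]; last by rewrite andbA KL.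
by case/andP: KL => /setUDK->.
Qed.

Lemma sum_brehmer_coeff (A U L : {set 'I_n}) x : is_clique e U -> U \subset A ->
  \sum_(K : {set 'I_n} | is_clique e K && (K \subset A) && (U \subset K))
    (if (K \subset L) && (L :\: K \subset nbhd_in e A K)
     then (-1) ^+ #|L :\: K| * clique_sqnorm L x else 0)
  = (L == U)%:R * clique_sqnorm L x.
Proof.
move=> cU UA; have [cL|ncL] := boolP (is_clique e L); last first.
  rewrite /clique_sqnorm (negbTE ncL) mulr0 big1 // => K _.
  by case: ifP; rewrite ?mulr0.
have [LA|nLA] := boolP (L \subset A); last first.
  have /negbTE-> : L != U by apply: contraNneq nLA => ->.
  rewrite mul0r big1 // => K /andP [/andP [_ KA] _]; case: ifP => // /andP [_ LKN].
  by rewrite (setD_nbhd_sub KA LKN) in nLA.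
rewrite eq_sym -(sum_sign_interval R U L) mulr_suml big_mkcond [RHS]big_mkcond.
apply: eq_bigr => K _.
case: (boolP (U \subset K)) => UK; rewrite ?andbF ?andbT //.
case: (boolP (K \subset L)) => KL /=; last by rewrite !if_same.
by rewrite (clique_sub KL cL) (subset_trans KL LA) (clique_setD_nbhd cL LA KL).
Qed.

Lemma sum_brehmer_form (A U : {set 'I_n}) x : is_clique e U -> U \subset A ->
  \sum_(K : {set 'I_n} | is_clique e K && (K \subset A) && (U \subset K))
     brehmer_form A K x = clique_sqnorm U x.
Proof.
move=> cU UA.
under eq_bigr => K /andP [/andP [cK _] _] do rewrite (brehmer_form_expand A x cK).
rewrite exchange_big /=.
under eq_bigr => L _ do rewrite (sum_brehmer_coeff L x cU UA).
rewrite (bigD1 U) //= eqxx mul1r big1 ?addr0 // => L /negbTE->.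
by rewrite mul0r.
Qed.

Definition brehmer_sum (A S K : {set 'I_n}) h k :=
  trace_sum e k S (fun p => brehmer_form A K (Tsword Ts p h)).

Lemma trace_sum_brehmer (A S : {set 'I_n}) h m :
  trace_sum e m S (word_sqnorm h) =
  \sum_(K : {set 'I_n} | is_clique e K && (K \subset A)) brehmer_sum A S K h m.
Proof.
rewrite -trace_sum_sum; apply: eq_trace_sum => p.
rewrite /word_sqnorm -clique_sqnorm0 -(sum_brehmer_form _ (clique0 e) (sub0set A)).
by apply: eq_bigl => K; rewrite sub0set andbT.
Qed.

Lemma trace_sum_avoid_brehmer (A S : {set 'I_n}) h k :
  A \subset S -> {in A & ~: A, forall a b, e a b} ->
  trace_sum e k (S :\: A) (word_sqnorm h) =
  \sum_(K : {set 'I_n} | is_clique e K && (K \subset A)) fdiff K (brehmer_sum A S K h) k.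
Proof.
move=> AS AdjA.
rewrite -(trace_sum_avoid e_sym e_irr (@word_sqnorm_treq h) k AS AdjA).
under eq_bigr => U /andP [cU UA].
  rewrite (_ : (if _ then _ else _) =
     \sum_(K : {set 'I_n} | is_clique e K && (K \subset A) && (U \subset K))
        if (#|U| <= k)%N then (-1) ^+ #|U| * brehmer_sum A S K h (k - #|U|) else 0).
    over.
  case: ifP => _; last by rewrite big1.
  rewrite -mulr_sumr -trace_sum_sum; congr (_ * _); apply: eq_trace_sum => p.
  by rewrite (sum_brehmer_form _ cU UA) /clique_sqnorm cU /word_sqnorm Tsword_cat.
rewrite (exchange_big_dep (fun K => is_clique e K && (K \subset A))) /=; last first.
  by move=> U K _ /andP [].
apply: eq_bigr => K /andP [cK KA]; apply: eq_bigl => U.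
have [UK|] := boolP (U \subset K); rewrite ?andbF ?andbT //.
by rewrite (clique_sub UK cK) (subset_trans UK KA) cK KA.
Qed.

Lemma trace_sum_component (A S : {set 'I_n}) h m :
  A \subset S -> {in A & ~: A, forall a b, e a b} ->
  (forall (K : {set 'I_n}) x, K \subset A -> is_clique e K -> 0 <= brehmer_form A K x) ->
  trace_sum e m S (word_sqnorm h) <=
    iter (clique_number_in e A) psum (fun k => trace_sum e k (S :\: A) (word_sqnorm h)) m.
Proof.
move=> AS AdjA form_ge0.
rewrite (trace_sum_brehmer A) (eq_iter_psum _ (fun k => trace_sum_avoid_brehmer h k AS AdjA)).
rewrite iter_psum_sum; apply: ler_sum => K /andP [cK KA].
have HK : (#|K| <= clique_number_in e A)%N by apply: leq_bigmax_cond; rewrite cK KA.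
rewrite -(subnK HK) iterD (eq_iter_psum _ (iter_psum_fdiff K _)).
by apply: iter_psum_ge => k; apply: trace_sum_ge0 => p; apply: form_ge0.
Qed.

Hypothesis T_brehmer : weak_Brehmer T Ts ip e.

Lemma brehmer_form_ge0 v (K : {set 'I_n}) x :
  K \subset compl_component e v -> is_clique e K ->
  0 <= brehmer_form (compl_component e v) K x.
Proof.
move=> KA cK; have := T_brehmer KA cK (Tsword Ts (enum K) x).
rewrite ip_suml // lecE => /andP [_]; rewrite raddf_sum /=.
by under eq_bigr => U _ do rewrite ipZl // Re_sign Re_ip_TjoinTjoinstar.
Qed.

Lemma trace_sum_bound h (S : {set 'I_n}) m : closed (compl_rel e) S ->
  trace_sum e m S (word_sqnorm h) <=
    iter (clique_number_in e S) psum (dirac0 (sqnorm ip h)) m.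
Proof.
elim: {S}_.+1 {-2}S (ltnSn #|S|) m => // N IH S ltSN m clS.
have [->|[v vS]] := set_0Vmem S.
  rewrite trace_sum_set0; apply: iter_psum_ge => k.
  exact/dirac0_ge0/sqnorm_ge0.
set A := compl_component e v.
have AS : A \subset S.
  by apply/subsetP => u; rewrite inE => /(closed_connect clS) <-.
have clSA : closed (compl_rel e) (S :\: A).
  by move=> x y xy; rewrite !in_setD (clS _ _ xy) (compl_component_closed e_sym v xy).
have ltSA : (#|S :\: A| < N)%N.
  rewrite -ltnS (leq_trans _ ltSN) // ltnS proper_card //; apply/properP.
  by split; [exact: subsetDl | exists v; rewrite // in_setD vS andbT inE connect0].
apply: le_trans (trace_sum_component h m AS (compl_component_joined e_sym (v:=v)) _) _.
  by move=> K x; apply: brehmer_form_ge0.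
apply: le_trans (iter_psum_le _ (fun k => IH _ ltSA k clSA) m) _.
rewrite -iterD; apply: iter_psum_mono => [k|]; first exact/dirac0_ge0/sqnorm_ge0.
exact: clique_number_inD (compl_component_joined e_sym (v:=v)).
Qed.

End GammaFamily.

Unset Implicit Arguments.
Local Open Scope ring_scope.

Theorem lemma4p3 (R : realType) (H : lmodType R[i]) (ip : H -> H -> R[i])
  (n : nat) (e : rel 'I_n) (T Ts : 'I_n -> H -> H) :
  is_inner_product ip -> hilbert_complete ip ->
  simple_graph e ->
  Gamma_family T Ts ip e ->
  weak_Brehmer T Ts ip e ->
  forall (m : nat) (h : H), (1 <= m)%N ->
    \sum_(w : m.-tuple 'I_n | fingraph.root (@word_step n e m) w == w)
        hnorm ip (Tsword Ts w h) ^+ 2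
    <= ('C(clique_number e + m - 1, m))%:R * hnorm ip h ^+ 2.
Proof.
move=> ip_inner _ e_simple T_family T_brehmer m h _.
have [e_sym e_irr] := e_simple.
under eq_bigr do rewrite hnorm_sqr //.
rewrite (sum_roots_trace_sum e_sym e_irr (word_sqnorm_treq ip_inner e_simple T_family h)).
have clT : closed (compl_rel e) [set: 'I_n] by move=> x y _; rewrite !inE.
apply: le_trans (trace_sum_bound ip_inner e_simple T_family T_brehmer h m clT) _.
by rewrite clique_number_inT iter_psum_dirac0 hnorm_sqr.
Qed.
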